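(* Let $N=(V,E)$ be a tree-child phylogenetic network such that no two parents of a hybrid node are connected by a path. For all nodes $u,v\in V$, the following are equivalent: (i) $C(u)=C(v)$; (ii) $u=v$, or $\{u,v\}$ consists of a hybrid node and its only child.
   Context: A DAG is labeled in a finite set $S$ if its leaves (out-degree 0) are bijectively labeled by $S$. A tree node has in-degree at most 1; a hybrid node has in-degree greater than 1; a tree child of a node is a child that is a tree node. A tree-child phylogenetic network is a rooted DAG labeled in $S$ in which every non-leaf node has at least one tree child, no tree node has out-degree 1, and every hybrid node has out-degree exactly 1. The condition that no two parents of a hybrid node are connected by a path means: if $u_1,u_2$ are the parents of a hybrid node, there is no path $u_1\rightsquigarrow u_2$ nor $u_2\rightsquigarrow u_1$. $C(u)$ (the cluster of $u$) is the set of leaves that are descendants of $u$ (reachable from $u$ by a path, including $u$ itself if it is a leaf). *)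

From mathcomp Require Import all_boot.
Set Implicit Arguments. Unset Strict Implicit. Unset Printing Implicit Defensive.

Section Network.
Variables (V : finType) (E : rel V).

Definition indeg (v : V) : nat := #|[set u | E u v]|.
Definition outdeg (u : V) : nat := #|[set w | E u w]|.

Definition is_leaf (v : V) : bool := outdeg v == 0.
Definition is_tree_node (v : V) : bool := indeg v <= 1.
Definition is_hybrid (v : V) : bool := 1 < indeg v.

Definition acyclic : Prop := forall u v, E u v -> ~~ connect E v u.

Definition rooted : Prop :=
  exists r : V, indeg r = 0 /\ forall v, connect E r v.

Definition labeled_in (S : finType) (lab : V -> S) : Prop :=
  {in is_leaf &, injective lab} /\ (forall s : S, exists2 x, is_leaf x & lab x = s).

Definition tree_child_network (S : finType) (lab : V -> S) : Prop :=
  acyclic /\ rooted /\ labeled_in lab /\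
  (forall u, ~~ is_leaf u -> exists2 w, E u w & is_tree_node w) /\
  (forall u, is_tree_node u -> outdeg u != 1) /\
  (forall u, is_hybrid u -> outdeg u = 1).

Definition hybrid_parents_unconnected : Prop :=
  forall h u1 u2, is_hybrid h -> E u1 h -> E u2 h -> u1 != u2 ->
    ~~ connect E u1 u2.

Definition cluster (S : finType) (lab : V -> S) (u : V) : {set S} :=
  [set lab x | x in [set x | is_leaf x & connect E u x]].

End Network.

(* Following tree children from a node [w] leads to a leaf whose ancestors are
   all comparable with [w], so [C(w) ⊆ C(z)] forces [w] and [z] to be
   comparable.  Let [v] be a proper ancestor of [u] with [C(v) ⊆ C(u)].  Every
   child [w] of [v] reaches [u]: if instead [w] lay strictly below [u], then [w]
   would be a hybrid whose parent [v] reaches its other parent through [u].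
   The same argument shows that the tree child [t] of [v] is its only child, so
   [v] has out-degree one and is hybrid.  Finally [t = u], since otherwise the
   tree node [t] would itself have out-degree one. *)
From mathcomp Require Import all_boot.
Set Implicit Arguments. Unset Strict Implicit. Unset Printing Implicit Defensive.

Lemma imset_in_inj_subset (aT rT : finType) (f : aT -> rT) (D : {pred aT})
    (A B : {set aT}) :
  {in D &, injective f} -> A \subset D -> B \subset D ->
  f @: A \subset f @: B -> A \subset B.
Proof.
move=> f_inj /subsetP AD /subsetP BD /subsetP fAB; apply/subsetP => x Ax.
have /imsetP[y By fxy] := fAB _ (imset_f f Ax).
by rewrite (f_inj x y (AD x Ax) (BD y By) fxy).
Qed.

Section Digraph.
Variables (V : finType) (E : rel V).

Lemma connect_split_first x y :
  connect E x y -> x != y -> exists2 z, E x z & connect E z y.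
Proof.
case/connectP => [[|z p]] /=; first by move=> _ -> /eqP.
by case/andP=> exz pz -> _; exists z => //; apply/connectP; exists p.
Qed.

Lemma connect_split_last x y :
  connect E x y -> x != y -> exists2 z, connect E x z & E z y.
Proof.
case/connectP => p pth ->; case/lastP: p pth => [|p z]; first by move=> _ /eqP.
rewrite rcons_path last_rcons => /andP[pp ez] _.
by exists (last x p) => //; apply/connectP; exists p.
Qed.

Lemma tree_node_parent_eq w p q :
  is_tree_node E w -> E p w -> E q w -> p = q.
Proof. by move/card_le1_eqP=> w_tree pw qw; apply: w_tree; rewrite inE. Qed.

Lemma hybrid_of_parents w p q : E p w -> E q w -> p != q -> is_hybrid E w.
Proof.
move=> pw qw pq; rewrite /is_hybrid /indeg.
have sub : [set p; q] \subset [set u | E u w].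
  by apply/subsetP => x; rewrite !inE => /orP[]/eqP->.
by apply: leq_trans (subset_leq_card sub); rewrite cards2 pq.
Qed.

Lemma arc_not_leaf v z : E v z -> ~~ is_leaf E v.
Proof.
by move=> vz; rewrite /is_leaf /outdeg cards_eq0; apply/set0Pn; exists z; rewrite inE.
Qed.

Lemma connect_tree_node_parent t p w :
  is_tree_node E t -> E p t -> connect E w t -> w != t -> connect E w p.
Proof.
move=> t_tree pt wt neq_wt; have [q wq qt] := connect_split_last wt neq_wt.
by rewrite (tree_node_parent_eq t_tree pt qt).
Qed.

Definition leaves_below u := [set x | is_leaf E x & connect E u x].

Lemma cluster_leaves_below (S : finType) (lab : V -> S) u :
  cluster E lab u = lab @: leaves_below u.
Proof. by []. Qed.

Lemma leaves_below_connect u v :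
  connect E u v -> leaves_below v \subset leaves_below u.
Proof.
move=> uv; apply/subsetP => x; rewrite !inE => /andP[-> vx].
exact: connect_trans uv vx.
Qed.

Lemma leaves_below_unique_child u v :
  E u v -> (forall w, E u w -> w = v) -> leaves_below u = leaves_below v.
Proof.
move=> uv v_only; apply/eqP; rewrite eqEsubset (leaves_below_connect (connect1 uv)).
rewrite andbT; apply/subsetP => y; rewrite !inE => /andP[y_leaf uy].
rewrite y_leaf /=; have [eq_uy|neq_uy] := eqVneq u y.
  by rewrite -eq_uy (negbTE (arc_not_leaf uv)) in y_leaf.
by have [z uz zy] := connect_split_first uy neq_uy; rewrite -(v_only z uz).
Qed.

End Digraph.

Section TreeChildNetwork.
Variables (V : finType) (E : rel V).
Hypothesis E_acyclic : acyclic E.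
Hypothesis tree_child :
  forall u, ~~ is_leaf E u -> exists2 w, E u w & is_tree_node E w.
Hypothesis parents_unconnected : hybrid_parents_unconnected E.

Lemma connect_antisym a b : connect E a b -> connect E b a -> a = b.
Proof.
move=> ab ba; apply/eqP; apply: contraT => neq_ab.
have [z az zb] := connect_split_first ab neq_ab.
by have := E_acyclic az; rewrite (connect_trans zb ba).
Qed.

Lemma proper_descendants_arc w w' :
  E w w' -> [set x | connect E w' x] \proper [set x | connect E w x].
Proof.
move=> ww'; apply/properP; split.
  by apply/subsetP => x; rewrite !inE; apply: connect_trans (connect1 ww').
by exists w; rewrite !inE ?connect0 //; apply: E_acyclic.
Qed.

(* Induction along a path of tree children: each tree child has a single
   parent, so anything reaching it from outside passes through its parent. *)
Lemma leaves_below_sub_comparable w z :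
  leaves_below E w \subset leaves_below E z -> connect E z w \/ connect E w z.
Proof.
have [n] := ubnP #|[set x | connect E w x]|; elim: n w => // n IHn w lt_w_n wz.
have [w_leaf|w_internal] := boolP (is_leaf E w).
  by left; have /subsetP/(_ w) := wz; rewrite !inE w_leaf connect0; apply.
have [w' ww' w'_tree] := tree_child w_internal.
have lt_w'_n : #|[set x | connect E w' x]| < n.
  exact: leq_trans (proper_card (proper_descendants_arc ww')) lt_w_n.
have w'z : leaves_below E w' \subset leaves_below E z.
  exact: subset_trans (leaves_below_connect (connect1 ww')) wz.
case: (IHn w' lt_w'_n w'z) => [zw'|w'z_conn]; last first.
  by right; apply: connect_trans (connect1 ww') w'z_conn.
have [->|neq_zw'] := eqVneq z w'; first by right; apply: connect1.
by left; apply: connect_tree_node_parent w'_tree ww' zw' neq_zw'.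
Qed.

(* A node on a path between the endpoints of an arc [v -> w] is [v] or [w]:
   otherwise [w] has a second parent below [v]. *)
Lemma connect_between_arc v w x :
  E v w -> connect E v x -> connect E x w -> x = v \/ x = w.
Proof.
move=> vw vx xw; have [->|neq_xv] := eqVneq x v; first by left.
have [->|neq_xw] := eqVneq x w; first by right.
have [p xp pw] := connect_split_last xw neq_xw.
have [eq_pv|neq_pv] := eqVneq p v.
  by rewrite eq_pv in xp; rewrite (connect_antisym xp vx) eqxx in neq_xv.
have w_hybrid := hybrid_of_parents pw vw neq_pv.
have neq_vp : v != p by rewrite eq_sym.
by move/negP: (parents_unconnected w_hybrid vw pw neq_vp); case; apply: connect_trans xp.
Qed.

Lemma leaves_below_sub_unique_child v u :
  connect E v u -> v != u -> leaves_below E v \subset leaves_below E u ->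
  exists t, [/\ E v t, is_tree_node E t, connect E t u &
                forall w, E v w -> w = t].
Proof.
move=> vu neq_vu vu_leaves.
have child_sub w : E v w -> leaves_below E w \subset leaves_below E u.
  by move=> vw; apply: subset_trans (leaves_below_connect (connect1 vw)) vu_leaves.
have child_to_u w : E v w -> connect E w u.
  move=> vw; case: (leaves_below_sub_comparable (child_sub w vw)) => // uw.
  case: (connect_between_arc vw vu uw) => [eq_uv|->]; last exact: connect0.
  by rewrite eq_uv eqxx in neq_vu.
have [z vz _] := connect_split_first vu neq_vu.
have [t vt t_tree] := tree_child (arc_not_leaf vz).
have tu := child_to_u t vt.
exists t; split=> // w vw.
have wt : leaves_below E w \subset leaves_below E t.
  exact: subset_trans (child_sub w vw) (leaves_below_connect tu).
case: (leaves_below_sub_comparable wt) => [tw|wt_conn].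
  case: (connect_between_arc vw (connect1 vt) tw) => // eq_tv.
  by have := E_acyclic vt; rewrite eq_tv connect0.
have [//|neq_wt] := eqVneq w t.
have wv := connect_tree_node_parent t_tree vt wt_conn neq_wt.
by have := E_acyclic vw; rewrite wv.
Qed.

Hypothesis tree_outdeg : forall u, is_tree_node E u -> outdeg E u != 1.

Lemma unique_child_hybrid v t :
  E v t -> (forall w, E v w -> w = t) -> is_hybrid E v.
Proof.
move=> vt t_only; rewrite /is_hybrid ltnNge; apply: contraT => /negbNE v_tree.
suff: outdeg E v = 1 by move/eqP; rewrite (negbTE (tree_outdeg v_tree)).
rewrite /outdeg (_ : [set w | E v w] = [set t]) ?cards1 //.
by apply/setP => w; rewrite !inE; apply/idP/eqP => [/t_only|->].
Qed.

Lemma leaves_below_sub_hybrid_parent v u :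
  connect E v u -> v != u -> leaves_below E v \subset leaves_below E u ->
  [/\ is_hybrid E v, E v u & forall w, E v w -> w = u].
Proof.
move=> vu neq_vu vu_leaves.
have [t [vt t_tree tu t_only]] := leaves_below_sub_unique_child vu neq_vu vu_leaves.
have [eq_tu|neq_tu] := eqVneq t u.
  by rewrite -eq_tu; split=> //; apply: unique_child_hybrid vt t_only.
have tu_leaves : leaves_below E t \subset leaves_below E u.
  by rewrite (leaves_below_unique_child vt t_only) in vu_leaves.
have [t' [tt' _ _ t'_only]] := leaves_below_sub_unique_child tu neq_tu tu_leaves.
have := unique_child_hybrid tt' t'_only.
by move: t_tree; rewrite /is_hybrid /is_tree_node ltnNge => ->.
Qed.

End TreeChildNetwork.

Theorem lemma5 (V : finType) (E : rel V) (S : finType) (lab : V -> S) :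
  tree_child_network E lab ->
  hybrid_parents_unconnected E ->
  forall u v : V,
    cluster E lab u = cluster E lab v <->
    (u = v \/
     (is_hybrid E u /\ E u v /\ (forall w, E u w -> w = v)) \/
     (is_hybrid E v /\ E v u /\ (forall w, E v w -> w = u))).
Proof.
move=> [acyc [_ [[lab_inj _] [tree_child [tree_outdeg _]]]]] unconnected u v.
rewrite !cluster_leaves_below.
have leaves_sub x : leaves_below E x \subset is_leaf E.
  by apply/subsetP => y; rewrite inE => /andP[].
have leaf_sub x y : lab @: leaves_below E x = lab @: leaves_below E y ->
    leaves_below E x \subset leaves_below E y.
  by move=> eq_cl; apply: imset_in_inj_subset lab_inj (leaves_sub x) (leaves_sub y) _;
    rewrite eq_cl.
split=> [eq_cl|].
  have [->|neq_uv] := eqVneq u v; first by left.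
  have uv := leaf_sub u v eq_cl; have vu := leaf_sub v u (esym eq_cl).
  case: (leaves_below_sub_comparable acyc tree_child uv) => [conn_vu|conn_uv].
    have neq_vu : v != u by rewrite eq_sym.
    by right; right; have [] := leaves_below_sub_hybrid_parent acyc tree_child
                               unconnected tree_outdeg conn_vu neq_vu vu.
  by right; left; have [] := leaves_below_sub_hybrid_parent acyc tree_child
                              unconnected tree_outdeg conn_uv neq_uv uv.
case=> [->//|[[_ [uv v_only]]|[_ [vu u_only]]]].
  by rewrite (leaves_below_unique_child uv v_only).
by rewrite (leaves_below_unique_child vu u_only).
Qed.
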